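(* Let $\triangle ABC$ be an obtuse triangle circumscribed about an ellipse with semi-axes $a>b>0$ whose center coincides with the circumcenter of $\triangle ABC$. Then the radius of the polar circle of $\triangle ABC$ equals $\sqrt{2ab}$. Equivalently, the area of the polar circle is twice the area of the ellipse.
   Context: A triangle is circumscribed about a conic if each of its three sidelines is tangent to the conic. For an obtuse triangle $ABC$ with orthocenter $H$, let $H_A$ be the foot of the perpendicular from $A$ to line $BC$. The polar circle of $\triangle ABC$ is the circle with center $H$ and radius $r_p$ with $r_p^2=|AH|\,|HH_A|$. This value does not depend on the chosen vertex. *)

From HB Require Import structures.
From mathcomp Require Import all_boot all_order all_algebra.
Set Implicit Arguments. Unset Strict Implicit. Unset Printing Implicit Defensive.
Import Order.TTheory GRing.Theory Num.Theory.
Local Open Scope ring_scope.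

Section Plane.
Variable R : rcfType.

Definition point := (R * R)%type.

Definition dot (u v : point) : R := u.1 * v.1 + u.2 * v.2.
Definition vsub (P Q : point) : point := (P.1 - Q.1, P.2 - Q.2).
Definition dist (P Q : point) : R := Num.sqrt (dot (vsub P Q) (vsub P Q)).

Definition on_line (P Q X : point) : Prop :=
  exists t : R, X = (P.1 + t * (Q.1 - P.1), P.2 + t * (Q.2 - P.2)).

Definition collinear (A B C : point) : Prop :=
  (B.1 - A.1) * (C.2 - A.2) - (B.2 - A.2) * (C.1 - A.1) = 0.

Definition obtuse (A B C : point) : Prop :=
  dot (vsub B A) (vsub C A) < 0 \/ dot (vsub A B) (vsub C B) < 0 \/
  dot (vsub A C) (vsub B C) < 0.

(* Ellipse with center O, unit major-axis direction u, semi-axes a, b *)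
Definition on_ellipse (O u : point) (a b : R) (X : point) : Prop :=
  let d := vsub X O in
  (dot d u) ^+ 2 / a ^+ 2 + (u.1 * d.2 - u.2 * d.1) ^+ 2 / b ^+ 2 = 1.

Definition tangent_line (P Q O u : point) (a b : R) : Prop :=
  exists! X : point, on_line P Q X /\ on_ellipse O u a b X.

Definition circumscribed_about (A B C O u : point) (a b : R) : Prop :=
  tangent_line A B O u a b /\ tangent_line B C O u a b /\ tangent_line C A O u a b.

Definition is_circumcenter (A B C O : point) : Prop :=
  dist O A = dist O B /\ dist O B = dist O C.

Definition is_orthocenter (A B C H : point) : Prop :=
  dot (vsub H A) (vsub C B) = 0 /\ dot (vsub H B) (vsub C A) = 0 /\
  dot (vsub H C) (vsub B A) = 0.

Definition is_foot (A B C HA : point) : Prop :=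
  on_line B C HA /\ dot (vsub A HA) (vsub C B) = 0.

(* Radius of the polar circle: r_p^2 = |AH| |H H_A| *)
Definition polar_radius (A H HA : point) : R :=
  Num.sqrt (dist A H * dist H HA).

End Plane.

(* Put the origin at the centre O and the axes along the ellipse.  A chord PQ of the
   circle |X|^2 = r touches the ellipse iff P and Q are conjugate with respect to the
   conic (a^2-b^2-r) x^2 - (a^2-b^2+r) y^2 = r (r-a^2-b^2).  Three pairwise conjugate
   points of the circle exist only if r = (a+b)^2 or r = (a-b)^2 (Poncelet's closure
   condition), and then half the power of the orthocenter A + B + C with respect to the
   circumcircle equals -2ab or 2ab.  Since AH and HH_A are both perpendicular to BC,
   |AH| |HH_A| = |(A - H).(H - H_A)|, which is exactly the absolute value of that
   half-power. *)

From mathcomp Require Import all_boot all_order all_algebra.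
From mathcomp Require Import ring lra.
Import Order.TTheory GRing.Theory Num.Theory.
Set Implicit Arguments. Unset Strict Implicit. Unset Printing Implicit Defensive.
Local Open Scope ring_scope.

Lemma unique_root_discr (F : fieldType) (al be ga t : F) : al != 0 ->
  (forall s, al * s ^+ 2 + be * s + ga = 0 -> s = t) ->
  al * t ^+ 2 + be * t + ga = 0 -> be ^+ 2 = 4 * al * ga.
Proof.
move=> al_neq0 root_uniq root_t.
have other_root : al * (- (be / al) - t) ^+ 2 + be * (- (be / al) - t) + ga = 0.
  by rewrite -root_t; field.
have be_t : be = - (2 * al * t).
  transitivity (- al * ((- (be / al) - t) + t)); first by field.
  by rewrite (root_uniq _ other_root); ring.
have ga_t : ga = al * t ^+ 2.
  transitivity ((al * t ^+ 2 + be * t + ga) - al * t ^+ 2 - be * t); first by ring.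
  by rewrite root_t be_t; ring.
by rewrite be_t ga_t; ring.
Qed.

Section PlaneVectors.
Variable R : rcfType.
Implicit Types (n v w z P Q S X Y : point R).

Definition cross v w : R := v.1 * w.2 - v.2 * w.1.

Definition lerp P Q (t : R) : point R := (P.1 + t * (Q.1 - P.1), P.2 + t * (Q.2 - P.2)).

Lemma dot_self_ge0 v : 0 <= dot v v.
Proof. by rewrite /dot -!expr2 addr_ge0 ?sqr_ge0. Qed.

Lemma dot_self_eq0 v : (dot v v == 0) = (v == (0, 0)).
Proof.
by case: v => x y; rewrite /dot /= -!expr2 paddr_eq0 ?sqr_ge0 // !sqrf_eq0 xpair_eqE.
Qed.

Lemma dot_vsub_neq0 P Q : P != Q -> dot (vsub P Q) (vsub P Q) != 0.
Proof.
by case: P Q => x y [x' y']; rewrite dot_self_eq0 /vsub !xpair_eqE !subr_eq0.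
Qed.

Lemma dist_eq_dot P Q S :
  dist P Q = dist P S -> dot (vsub Q P) (vsub Q P) = dot (vsub S P) (vsub S P).
Proof.
have flip X : dot (vsub P X) (vsub P X) = dot (vsub X P) (vsub X P).
  by rewrite /dot /vsub /=; ring.
by rewrite /dist -!flip => /eqP; rewrite eqr_sqrt ?dot_self_ge0 // => /eqP.
Qed.

Lemma lagrange_identity v w : dot v v * dot w w = dot v w ^+ 2 + cross v w ^+ 2.
Proof. by rewrite /dot /cross; ring. Qed.

Lemma cross_perp z v w : dot z z != 0 -> dot v z = 0 -> dot w z = 0 -> cross v w = 0.
Proof.
move=> z_neq0 vz wz; apply: (mulfI z_neq0); rewrite mulr0.
transitivity (z.1 * (w.2 * dot v z - v.2 * dot w z) + z.2 * (v.1 * dot w z - w.1 * dot v z)).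
  by rewrite /dot /cross; ring.
by rewrite vz wz; ring.
Qed.

Lemma noncollinear_neq P Q S : ~ collinear P Q S -> [/\ P != Q, Q != S & S != P].
Proof. by move=> ncol; split; apply/eqP => e; apply: ncol; rewrite /collinear e; ring. Qed.

Lemma collinear_on_line n P Q S c : dot n n != 0 ->
  dot n P = c -> dot n Q = c -> dot n S = c -> collinear P Q S.
Proof.
move=> n_neq0 nP nQ nS; change (cross (vsub Q P) (vsub S P) = 0).
apply: (cross_perp n_neq0).
  by transitivity (dot n Q - dot n P); [rewrite /dot /vsub /=; ring | rewrite nP nQ subrr].
by transitivity (dot n S - dot n P); [rewrite /dot /vsub /=; ring | rewrite nP nS subrr].
Qed.

Lemma lerp_inj P Q : P != Q -> injective (lerp P Q).
Proof.
move=> PQ s t est; apply/eqP; rewrite -subr_eq0 -sqrf_eq0.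
have : (s - t) ^+ 2 * dot (vsub Q P) (vsub Q P) =
       dot (vsub (lerp P Q s) (lerp P Q t)) (vsub (lerp P Q s) (lerp P Q t)).
  by rewrite /dot /vsub /lerp /=; ring.
rewrite est /dot /vsub /= !subrr mulr0 addr0 => /eqP.
by rewrite mulf_eq0 (negbTE (dot_vsub_neq0 _)) ?orbF // eq_sym.
Qed.

Lemma chord_on_line n X Y (r c : R) : dot n n != 0 -> X != Y ->
  dot X X = r -> dot Y Y = r -> dot n X = c -> dot n Y = c ->
  [/\ dot n n * (X.1 + Y.1) = 2 * c * n.1, dot n n * (X.2 + Y.2) = 2 * c * n.2,
      dot n n * dot X Y = 2 * c ^+ 2 - r * dot n n,
      dot n n ^+ 2 * (X.1 * Y.1) = c ^+ 2 * n.1 ^+ 2 - n.2 ^+ 2 * (r * dot n n - c ^+ 2) &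
      dot n n ^+ 2 * (X.2 * Y.2) = c ^+ 2 * n.2 ^+ 2 - n.1 ^+ 2 * (r * dot n n - c ^+ 2)].
Proof.
move=> n_neq0 XY XX YY nX nY.
have decomp v : dot n n * v.1 = dot n v * n.1 - cross n v * n.2 /\
                dot n n * v.2 = dot n v * n.2 + cross n v * n.1.
  by split; rewrite /dot /cross; ring.
have cross_sq v : dot v v = r -> dot n v = c -> cross n v ^+ 2 = r * dot n n - c ^+ 2.
  move=> vv nv; transitivity (dot n n * dot v v - dot n v ^+ 2).
    by rewrite lagrange_identity; ring.
  by rewrite vv nv mulrC.
have [dX1 dX2] := decomp X; have [dY1 dY2] := decomp Y.
have crossY : cross n Y = - cross n X.
  have /eqP : (cross n Y - cross n X) * (cross n Y + cross n X) = 0.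
    by rewrite -subr_sqr !cross_sq // subrr.
  rewrite mulf_eq0 subr_eq0 addr_eq0 => /orP[/eqP eXY|/eqP //].
  have eX1 : X.1 = Y.1 by apply: (mulfI n_neq0); rewrite dX1 dY1 nX nY eXY.
  have eX2 : X.2 = Y.2 by apply: (mulfI n_neq0); rewrite dX2 dY2 nX nY eXY.
  by case/eqP: XY; rewrite (surjective_pairing X) eX1 eX2 -surjective_pairing.
split.
- by rewrite mulrDr dX1 dY1 nX nY crossY; ring.
- by rewrite mulrDr dX2 dY2 nX nY crossY; ring.
- apply: (mulfI n_neq0).
  transitivity ((dot n n * X.1) * (dot n n * Y.1) + (dot n n * X.2) * (dot n n * Y.2)).
    by rewrite /dot; ring.
  rewrite dX1 dX2 dY1 dY2 nX nY crossY.
  transitivity (c ^+ 2 * dot n n - cross n X ^+ 2 * dot n n); first by rewrite /dot; ring.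
  by rewrite cross_sq //; ring.
- transitivity ((dot n n * X.1) * (dot n n * Y.1)); first by ring.
  rewrite dX1 dY1 nX nY crossY.
  transitivity (c ^+ 2 * n.1 ^+ 2 - n.2 ^+ 2 * cross n X ^+ 2); first by ring.
  by rewrite cross_sq.
- transitivity ((dot n n * X.2) * (dot n n * Y.2)); first by ring.
  rewrite dX2 dY2 nX nY crossY.
  transitivity (c ^+ 2 * n.2 ^+ 2 - n.1 ^+ 2 * cross n X ^+ 2); first by ring.
  by rewrite cross_sq.
Qed.

End PlaneVectors.

Section Frame.
Variables (R : rcfType) (O u : point R).
Implicit Types (P Q X : point R).

Definition frame X : point R :=
  (dot (vsub X O) u, u.1 * (vsub X O).2 - u.2 * (vsub X O).1).

Lemma frame_lerp P Q t : frame (lerp P Q t) = lerp (frame P) (frame Q) t.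
Proof. by rewrite /frame /lerp /dot /vsub /=; congr (_, _); ring. Qed.

Hypothesis u_unit : dot u u = 1.

Lemma dot_frame P Q : dot (frame P) (frame Q) = dot (vsub P O) (vsub Q O).
Proof.
transitivity (dot (vsub P O) (vsub Q O) * dot u u); last by rewrite u_unit mulr1.
by rewrite /frame /dot /vsub /=; ring.
Qed.

Lemma collinear_frame P Q X : collinear (frame P) (frame Q) (frame X) <-> collinear P Q X.
Proof.
change (cross (vsub (frame Q) (frame P)) (vsub (frame X) (frame P)) = 0 <->
        cross (vsub Q P) (vsub X P) = 0).
have -> : cross (vsub (frame Q) (frame P)) (vsub (frame X) (frame P)) =
          cross (vsub Q P) (vsub X P) * dot u u.
  by rewrite /frame /cross /dot /vsub /=; ring.
by rewrite u_unit mulr1.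
Qed.

End Frame.

Section EllipseTangents.
Variables (R : rcfType) (a b : R).
Hypotheses (a_neq0 : a != 0) (b_neq0 : b != 0).
Implicit Types (P Q X : point R).

Definition on_std_ellipse X : Prop := X.1 ^+ 2 / a ^+ 2 + X.2 ^+ 2 / b ^+ 2 = 1.

(* The line l x + m y = k through P and Q has l = Q.2 - P.2, m = P.1 - Q.1 and
   k = cross P Q; it touches x^2/a^2 + y^2/b^2 = 1 iff a^2 l^2 + b^2 m^2 = k^2. *)
Definition chord_tangent P Q : Prop :=
  a ^+ 2 * (Q.2 - P.2) ^+ 2 + b ^+ 2 * (Q.1 - P.1) ^+ 2 = cross P Q ^+ 2.

Lemma on_ellipse_frame O u X : on_ellipse O u a b X = on_std_ellipse (frame O u X).
Proof. by []. Qed.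

Lemma std_tangent_chord P Q :
  (exists! t, on_std_ellipse (lerp P Q t)) -> chord_tangent P Q.
Proof.
move=> [t [on_t t_uniq]].
have PQ : P != Q.
  apply/eqP => ePQ; subst Q.
  have lerpPP s : lerp P P s = P by rewrite /lerp !subrr !mulr0 !addr0 -surjective_pairing.
  have on_t1 : on_std_ellipse (lerp P P (t + 1)) by rewrite lerpPP -(lerpPP t).
  by have := t_uniq _ on_t1; lra.
set dx := Q.1 - P.1; set dy := Q.2 - P.2.
set al := (dx / a) ^+ 2 + (dy / b) ^+ 2.
set be := 2 * (P.1 * dx / a ^+ 2 + P.2 * dy / b ^+ 2).
set ga := P.1 ^+ 2 / a ^+ 2 + P.2 ^+ 2 / b ^+ 2 - 1.
have on_stdE s : on_std_ellipse (lerp P Q s) <-> al * s ^+ 2 + be * s + ga = 0.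
  have -> : al * s ^+ 2 + be * s + ga =
            (lerp P Q s).1 ^+ 2 / a ^+ 2 + (lerp P Q s).2 ^+ 2 / b ^+ 2 - 1.
    by rewrite /lerp /al /be /ga /dx /dy /=; field; rewrite a_neq0 b_neq0.
  by rewrite /on_std_ellipse; split=> [->|/subr0_eq //]; rewrite subrr.
have al_neq0 : al != 0.
  have : (dx, dy) != (0, 0) by rewrite -dot_self_eq0; apply: dot_vsub_neq0; rewrite eq_sym.
  apply: contraNneq => al0.
  have : (dx / a, dy / b) == (0, 0) by rewrite -dot_self_eq0 /dot -!expr2 -/al al0.
  by rewrite !xpair_eqE !mulf_eq0 !invr_eq0 (negbTE a_neq0) (negbTE b_neq0) !orbF.
have root_uniq s : al * s ^+ 2 + be * s + ga = 0 -> s = t by move/on_stdE/t_uniq ->.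
have discr := unique_root_discr al_neq0 root_uniq ((on_stdE t).1 on_t).
have ab2_neq0 : a ^+ 2 * b ^+ 2 != 0 by rewrite mulf_neq0 ?expf_neq0.
apply/eqP; rewrite -subr_eq0; apply/eqP; apply: (mulfI ab2_neq0).
transitivity (a ^+ 4 * b ^+ 4 / 4 * (be ^+ 2 - 4 * al * ga)).
  by rewrite /al /be /ga /cross /dx /dy; field; rewrite b_neq0 a_neq0.
by rewrite discr subrr !mulr0.
Qed.

Lemma tangent_line_chord O u P Q : P != Q -> tangent_line P Q O u a b ->
  chord_tangent (frame O u P) (frame O u Q).
Proof.
move=> PQ [X [[[t ->] onX] X_uniq]]; apply: std_tangent_chord.
exists t; split; first by rewrite -frame_lerp.
move=> s on_s; apply: (lerp_inj PQ); apply: X_uniq; split; first by exists s.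
by rewrite on_ellipse_frame frame_lerp.
Qed.

End EllipseTangents.

Section Conjugacy.
Variables (R : rcfType) (a b r : R).
Implicit Types (P Q : point R).

(* P and Q are conjugate for the conic (a^2-b^2-r) x^2 - (a^2-b^2+r) y^2 = r (r-a^2-b^2);
   [polar P] is the normal of the polar line of P. *)
Definition polar P : point R := ((a ^+ 2 - b ^+ 2 - r) * P.1, - ((a ^+ 2 - b ^+ 2 + r) * P.2)).

Definition conjugate P Q : Prop := dot (polar P) Q = r * (r - a ^+ 2 - b ^+ 2).

Lemma dot_polarC P Q : dot (polar P) Q = dot (polar Q) P.
Proof. by rewrite /dot /polar /=; ring. Qed.

Lemma chord_tangent_conjugate P Q : dot P P = r -> dot Q Q = r -> P != Q ->
  chord_tangent a b P Q -> conjugate P Q.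
Proof.
move=> PP QQ PQ tPQ.
have r_PQ : r - dot P Q != 0.
  have e : dot (vsub P Q) (vsub P Q) = 2 * (r - dot P Q).
    transitivity (dot P P + dot Q Q - 2 * dot P Q); first by rewrite /dot /vsub /=; ring.
    by rewrite PP QQ; ring.
  by have := dot_vsub_neq0 PQ; rewrite e mulf_eq0 negb_or => /andP[].
apply/eqP; rewrite -subr_eq0; apply/eqP; apply: (mulfI r_PQ); rewrite mulr0.
transitivity (r * (a ^+ 2 * (Q.2 - P.2) ^+ 2 + b ^+ 2 * (Q.1 - P.1) ^+ 2 - cross P Q ^+ 2)
              - (a ^+ 2 * P.1 ^+ 2 + b ^+ 2 * P.2 ^+ 2 - r ^+ 2) * (dot Q Q - r)).
  by rewrite /polar -PP /dot /cross /=; ring.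
by rewrite tPQ QQ !subrr mulr0 !mulr0 subrr.
Qed.

End Conjugacy.

(* For P1, P2, P3 on a circle centred at the origin, this is half the power of their
   orthocenter P1 + P2 + P3 with respect to the circle. *)
Definition ortho_power (R : rcfType) (P1 P2 P3 : point R) : R :=
  dot P1 P1 + dot P1 P2 + dot P2 P3 + dot P3 P1.

Section PonceletTriangle.
Variables (R : rcfType) (a b r : R) (P1 P2 P3 : point R).
Hypotheses (b_gt0 : 0 < b) (b_lt_a : b < a).
Hypotheses (P1P1 : dot P1 P1 = r) (P2P2 : dot P2 P2 = r) (P3P3 : dot P3 P3 = r).
Hypothesis noncol : ~ collinear P1 P2 P3.
Hypotheses (conj12 : conjugate a b r P1 P2) (conj23 : conjugate a b r P2 P3)
           (conj31 : conjugate a b r P3 P1).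

Let a_gt0 : 0 < a := lt_trans b_gt0 b_lt_a.

Local Notation p := (a ^+ 2 - b ^+ 2 - r).
Local Notation q := (a ^+ 2 - b ^+ 2 + r).
Local Notation c := (r * (r - a ^+ 2 - b ^+ 2)).
Local Notation n := (polar a b r P1).
Local Notation N := (dot n n).

Let n1 : n.1 = p * P1.1. Proof. by []. Qed.
Let n2 : n.2 = - (q * P1.2). Proof. by []. Qed.
Let NE : N = p ^+ 2 * P1.1 ^+ 2 + q ^+ 2 * P1.2 ^+ 2.
Proof. by rewrite /dot n1 n2; ring. Qed.
Let gE : dot n P1 = p * P1.1 ^+ 2 - q * P1.2 ^+ 2.
Proof. by rewrite /dot n1 n2; ring. Qed.
Let x1_sq : P1.1 ^+ 2 = r - P1.2 ^+ 2.
Proof. by rewrite -P1P1 /dot; ring. Qed.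

Let nP2 : dot n P2 = c := conj12.
Let nP3 : dot n P3 = c. Proof. by rewrite dot_polarC. Qed.

Let r_neq0 : r != 0.
Proof.
have [P12 _ _] := noncollinear_neq noncol.
apply: contra P12 => /eqP r0.
have /eqP -> : P1 == (0, 0) by rewrite -dot_self_eq0 P1P1 r0.
by have /eqP -> : P2 == (0, 0) by rewrite -dot_self_eq0 P2P2 r0.
Qed.

Let N_neq0 : N != 0.
Proof.
rewrite dot_self_eq0; apply/eqP => n0.
have /eqP : c = 0 by rewrite -nP2 n0 /dot /= !mul0r addr0.
rewrite mulf_eq0 (negbTE r_neq0) /= => /eqP circ_ab.
have [px qy] : p * P1.1 = 0 /\ q * P1.2 = 0.
  by split; [rewrite -n1 n0 | apply/eqP; rewrite -oppr_eq0 -n2 n0].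
have x1_0 : P1.1 = 0.
  have b2_neq0 : 2 * b ^+ 2 != 0 by rewrite mulf_neq0 ?expf_neq0 ?pnatr_eq0 ?gt_eqF.
  apply: (mulfI b2_neq0); rewrite mulr0.
  transitivity (- (p * P1.1) - (r - a ^+ 2 - b ^+ 2) * P1.1); first by ring.
  by rewrite px circ_ab; ring.
have y1_0 : P1.2 = 0.
  have a2_neq0 : 2 * a ^+ 2 != 0 by rewrite mulf_neq0 ?expf_neq0 ?pnatr_eq0 ?gt_eqF.
  apply: (mulfI a2_neq0); rewrite mulr0.
  transitivity (q * P1.2 - (r - a ^+ 2 - b ^+ 2) * P1.2); first by ring.
  by rewrite qy circ_ab; ring.
by move: r_neq0; rewrite -P1P1 /dot x1_0 y1_0 mul0r addr0 eqxx.
Qed.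

Let g_neq_c : dot n P1 != c.
Proof. by apply/eqP => nP1; apply: noncol; apply: (collinear_on_line N_neq0 nP1 nP2 nP3). Qed.

(* This vanishes only when P1 is a focus (y = 0, x^2 = a^2 - b^2), which would make n = 0. *)
Let focal_neq0 : 4 * (a ^+ 2 - b ^+ 2) * P1.2 ^+ 2 + (r - (a ^+ 2 - b ^+ 2)) ^+ 2 != 0.
Proof.
have AA_gt0 : 0 < a ^+ 2 - b ^+ 2.
  by rewrite subr_sqr mulr_gt0 // ?subr_gt0 // addr_gt0.
have y_term : 0 <= 4 * (a ^+ 2 - b ^+ 2) * P1.2 ^+ 2.
  by rewrite mulr_ge0 ?sqr_ge0 // mulr_ge0 ?ler0n // ltW.
apply: contra N_neq0; rewrite paddr_eq0 ?sqr_ge0 // => /andP[].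
rewrite -mulrA mulf_eq0 pnatr_eq0 /= mulf_eq0 (gt_eqF AA_gt0) sqrf_eq0 /= => /eqP y1_0.
rewrite sqrf_eq0 subr_eq0 => /eqP ->.
by apply/eqP; rewrite /dot /polar /= y1_0; ring.
Qed.

Lemma poncelet_closure : r = (a + b) ^+ 2 \/ r = (a - b) ^+ 2.
Proof.
have [_ P23 _] := noncollinear_neq noncol.
have [_ _ _ x23 y23] := chord_on_line N_neq0 P23 P2P2 P3P3 nP2 nP3.
have closure : N ^+ 2 * (dot (polar a b r P2) P3 - c) =
    r ^+ 2 * ((r - (a + b) ^+ 2) * (r - (a - b) ^+ 2)) *
    (4 * (a ^+ 2 - b ^+ 2) * P1.2 ^+ 2 + (r - (a ^+ 2 - b ^+ 2)) ^+ 2) * (dot n P1 - c).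
  transitivity (p * (N ^+ 2 * (P2.1 * P3.1)) - q * (N ^+ 2 * (P2.2 * P3.2)) - c * N ^+ 2).
    have -> : dot (polar a b r P2) P3 = p * P2.1 * P3.1 - q * P2.2 * P3.2.
      by rewrite /dot /polar /=; ring.
    by ring.
  by rewrite x23 y23 n1 n2 sqrrN !exprMn gE NE x1_sq; ring.
have gc_neq0 : dot n P1 - c != 0 by rewrite subr_eq0.
move/eqP: closure; rewrite conj23 subrr mulr0 eq_sym.
rewrite mulf_eq0 (negbTE gc_neq0) orbF mulf_eq0 (negbTE focal_neq0) orbF.
rewrite mulf_eq0 expf_eq0 (negbTE r_neq0) andbF /= mulf_eq0 !subr_eq0.
by case/orP=> /eqP; [left | right].
Qed.

Lemma ortho_power_polar : N * ortho_power P1 P2 P3 = 2 * c * (dot n P1 + c).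
Proof.
have [_ P23 _] := noncollinear_neq noncol.
have [s1 s2 d23 _ _] := chord_on_line N_neq0 P23 P2P2 P3P3 nP2 nP3.
transitivity (r * N + P1.1 * (N * (P2.1 + P3.1)) + P1.2 * (N * (P2.2 + P3.2)) + N * dot P2 P3).
  by rewrite /ortho_power P1P1 /dot; ring.
by rewrite s1 s2 d23 /dot; ring.
Qed.

Lemma ortho_power_abs : `|ortho_power P1 P2 P3| = 2 * a * b.
Proof.
have ab_ge0 : 0 <= 2 * a * b by rewrite !mulr_ge0 ?ler0n // ltW.
suff [->|->] : ortho_power P1 P2 P3 = - (2 * a * b) \/ ortho_power P1 P2 P3 = 2 * a * b.
- by rewrite normrN ger0_norm.
- by rewrite ger0_norm.
(* On the circle r = (a + b)^2, resp. (a - b)^2, c (dot n P1 + c) = -ab N, resp. ab N. *)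
have [er|er] := poncelet_closure; [left | right]; apply: (mulfI N_neq0);
  by rewrite ortho_power_polar gE NE x1_sq er; ring.
Qed.

End PonceletTriangle.

Section Orthocenter.
Variables (R : rcfType) (A B C O H HA : point R).

Lemma orthocenter_eq : ~ collinear A B C -> is_circumcenter A B C O ->
  is_orthocenter A B C H -> H = (A.1 + B.1 + C.1 - 2 * O.1, A.2 + B.2 + C.2 - 2 * O.2).
Proof.
move=> ncol [/dist_eq_dot OAB /dist_eq_dot OBC] [HA_BC [HB_CA _]].
set K := (_, _); apply/eqP; apply: contraT => HK; case: ncol.
have HK_BC : dot (vsub C B) (vsub H K) = 0.
  transitivity (dot (vsub H A) (vsub C B) -
                (dot (vsub C O) (vsub C O) - dot (vsub B O) (vsub B O))).
    by rewrite /K /dot /vsub /=; ring.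
  by rewrite HA_BC OBC !subrr.
have HK_CA : dot (vsub C A) (vsub H K) = 0.
  transitivity (dot (vsub H B) (vsub C A) -
                (dot (vsub C O) (vsub C O) - dot (vsub A O) (vsub A O))).
    by rewrite /K /dot /vsub /=; ring.
  by rewrite HB_CA OAB OBC !subrr.
transitivity (- cross (vsub C B) (vsub C A)); first by rewrite /cross /vsub /=; ring.
by rewrite (cross_perp (dot_vsub_neq0 HK) HK_BC HK_CA) oppr0.
Qed.

Lemma foot_dot_ortho_power : is_circumcenter A B C O ->
  H = (A.1 + B.1 + C.1 - 2 * O.1, A.2 + B.2 + C.2 - 2 * O.2) -> is_foot A B C HA ->
  dot (vsub A H) (vsub H HA) = - ortho_power (vsub A O) (vsub B O) (vsub C O).
Proof.
move=> [/dist_eq_dot OAB /dist_eq_dot OBC] -> [[t ->] _].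
transitivity (- ortho_power (vsub A O) (vsub B O) (vsub C O)
  + (dot (vsub A O) (vsub A O) - dot (vsub C O) (vsub C O))
  + t * (dot (vsub C O) (vsub C O) - dot (vsub B O) (vsub B O))).
  by rewrite /ortho_power /dot /vsub /=; ring.
by rewrite OAB OBC !subrr mulr0 !addr0.
Qed.

Lemma polar_radius_dot : B != C -> is_orthocenter A B C H -> is_foot A B C HA ->
  polar_radius A H HA = Num.sqrt `|dot (vsub A H) (vsub H HA)|.
Proof.
move=> BC [HA_BC _] [_ foot_perp].
have AH_BC : dot (vsub A H) (vsub C B) = 0.
  transitivity (- dot (vsub H A) (vsub C B)); first by rewrite /dot /vsub /=; ring.
  by rewrite HA_BC oppr0.
have HHA_BC : dot (vsub H HA) (vsub C B) = 0.
  transitivity (dot (vsub H A) (vsub C B) + dot (vsub A HA) (vsub C B)).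
    by rewrite /dot /vsub /=; ring.
  by rewrite HA_BC foot_perp addr0.
have CB : dot (vsub C B) (vsub C B) != 0 by apply: dot_vsub_neq0; rewrite eq_sym.
rewrite /polar_radius /dist -sqrtrM ?dot_self_ge0 // lagrange_identity.
by rewrite (cross_perp CB AH_BC HHA_BC) expr0n addr0 sqrtr_sqr.
Qed.

End Orthocenter.

Theorem corollary5p16 (R : rcfType) (A B C O u H HA : point R) (a b : R) :
  ~ collinear A B C ->
  obtuse A B C ->
  0 < b -> b < a ->
  dot u u = 1 ->
  circumscribed_about A B C O u a b ->
  is_circumcenter A B C O ->
  is_orthocenter A B C H ->
  is_foot A B C HA ->
  polar_radius A H HA = Num.sqrt (2 * a * b).
Proof.
move=> ncol _ b_gt0 b_lt_a u_unit [tAB [tBC tCA]] circ orth foot.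
have [AB BC CA] := noncollinear_neq ncol.
have a_neq0 : a != 0 by rewrite gt_eqF // (lt_trans b_gt0).
have b_neq0 : b != 0 by rewrite gt_eqF.
have [/dist_eq_dot OAB /dist_eq_dot OBC] := circ.
set r := dot (vsub A O) (vsub A O).
have FA : dot (frame O u A) (frame O u A) = r by rewrite (dot_frame O u_unit).
have FB : dot (frame O u B) (frame O u B) = r by rewrite (dot_frame O u_unit) -OAB.
have FC : dot (frame O u C) (frame O u C) = r by rewrite (dot_frame O u_unit) -OBC -OAB.
have ncolF : ~ collinear (frame O u A) (frame O u B) (frame O u C).
  by rewrite (collinear_frame O u_unit).
have [FAB FBC FCA] := noncollinear_neq ncolF.
have conjAB := chord_tangent_conjugate FA FB FAB (tangent_line_chord a_neq0 b_neq0 AB tAB).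
have conjBC := chord_tangent_conjugate FB FC FBC (tangent_line_chord a_neq0 b_neq0 BC tBC).
have conjCA := chord_tangent_conjugate FC FA FCA (tangent_line_chord a_neq0 b_neq0 CA tCA).
rewrite (polar_radius_dot BC orth foot).
rewrite (foot_dot_ortho_power circ (orthocenter_eq ncol circ orth) foot) normrN.
rewrite -(ortho_power_abs b_gt0 b_lt_a FA FB FC ncolF conjAB conjBC conjCA).
by rewrite /ortho_power !(dot_frame O u_unit).
Qed.
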